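(* Let $d\ge2$, $\alpha\in[0,1]$, $|\phi_+\rangle=d^{-1/2}\sum_{i=1}^d|i\rangle\otimes|i\rangle$, and $\rho=\alpha\,\mathbb I/d^2+(1-\alpha)|\phi_+\rangle\langle\phi_+|$ on $\mathbb C^d\otimes\mathbb C^d$. Let $p_n=\mathrm{Tr}[(\rho^{T_A})^n]$. Then $p_3<p_2^2$ if and only if $\rho^{T_A}$ has a negative eigenvalue (which happens exactly when $\alpha<d/(d+1)$).
   Context: The partial transpose on the first factor $A$ is defined in the computational product basis by $(|k_A,k_B\rangle\langle l_A,l_B|)^{T_A}=|l_A,k_B\rangle\langle k_A,l_B|$. *)

From mathcomp Require Import all_boot all_order all_algebra.
From mathcomp Require Import mxtens.
Set Implicit Arguments. Unset Strict Implicit. Unset Printing Implicit Defensive.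
Import Order.TTheory GRing.Theory Num.Theory.
Local Open Scope ring_scope.

(* Scalars: any numerically closed field C (e.g. the complex numbers).
   The space C^d (x) C^d is indexed by 'I_(d*d) with the product basis
   |k_A,k_B> <-> mxtens_index (k_A, k_B). *)

Section Defs.
Variable C : numClosedFieldType.

(* partial transpose on the first factor:
   (|kA,kB><lA,lB|)^{T_A} = |lA,kB><kA,lB|, extended linearly, i.e.
   (M^{T_A})_{(kA,kB),(lA,lB)} = M_{(lA,kB),(kA,lB)}. *)
Definition ptA (d : nat) (M : 'M[C]_(d * d)) : 'M[C]_(d * d) :=
  \matrix_(i, j)
    M (mxtens_index ((mxtens_unindex j).1, (mxtens_unindex i).2))
      (mxtens_index ((mxtens_unindex i).1, (mxtens_unindex j).2)).

Definition phi_plus (d : nat) : 'cV[C]_(d * d) :=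
  (sqrtC (d%:R : C))^-1 *: \sum_(i < d) delta_mx (mxtens_index (i, i)) 0.

Definition adjmx m n (A : 'M[C]_(m, n)) : 'M[C]_(n, m) := (map_mx Num.conj A)^T.

Definition rho_iso (d : nat) (alpha : C) : 'M[C]_(d * d) :=
  (alpha / (d%:R ^+ 2)) *: 1%:M
  + (1 - alpha) *: (phi_plus d *m adjmx (phi_plus d)).

Definition pmoment (d : nat) (alpha : C) (n : nat) : C :=
  \tr (ptA (rho_iso d alpha) ^+ n).

End Defs.

From mathcomp Require Import all_boot all_order all_algebra.
From mathcomp Require Import mxtens.
From mathcomp Require Import fingroup perm ring.
Import Order.TTheory GRing.Theory Num.Theory.
Local Open Scope ring_scope.

(* Let F be the swap operator |k,l> |-> |l,k> on C^d (x) C^d.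
   The partial transpose of |phi_+><phi_+| is F/d, so the partially
   transposed isotropic state is a "Werner-type" matrix
     W(a,b) = a I + b F,   a = alpha/d^2,  b = (1-alpha)/d.
   Since F^2 = I, these matrices form a commutative algebra in which
   W(a,b) W(c,e) = W(ac+be, ae+bc) and Tr W(a,b) = a d^2 + b d.  Hence:
   - every eigenvalue of W(a,b) is a+b or a-b, and a-b is one when d >= 2
     (eigenvector |0,1> - |1,0>); as a+b > 0 here, a negative eigenvalue
     exists iff a-b < 0, i.e. iff alpha < d/(d+1);
   - under the normalisation Tr W = 1 the moments satisfy
     p_3 - p_2^2 = d^2 (d^2-1) (a+b) b^2 (a-b),
     whose sign is that of a-b when b > 0 (and it vanishes when b = 0). *)

Section SwapOperator.
Variable C : numClosedFieldType.
Variable d : nat.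

Notation idx := (@mxtens_index d d).

Lemma idx_eq (p q : 'I_d * 'I_d) : (idx p == idx q) = (p == q).
Proof. exact: (inj_eq (can_inj (@mxtens_indexK d d))). Qed.

Definition swap_index (k : 'I_(d * d)) : 'I_(d * d) :=
  idx ((mxtens_unindex k).2, (mxtens_unindex k).1).

Lemma swap_indexK : involutive swap_index.
Proof.
by move=> k; rewrite /swap_index mxtens_indexK; exact: mxtens_unindexK.
Qed.

Lemma swap_index_idx p q : swap_index (idx (p, q)) = idx (q, p).
Proof. by rewrite /swap_index mxtens_indexK. Qed.

Definition swap_perm : 'S_(d * d) := perm (inv_inj swap_indexK).

Definition swap_mx : 'M[C]_(d * d) := perm_mx swap_perm.

Lemma swap_mxE i1 i2 j1 j2 :
  swap_mx (idx (i1, i2)) (idx (j1, j2)) = ((i2 == j1) && (i1 == j2))%:R.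
Proof. by rewrite !mxE permE swap_index_idx idx_eq xpair_eqE. Qed.

Lemma swap_mx_invol : swap_mx *m swap_mx = 1%:M.
Proof.
rewrite -perm_mxM -perm_mx1; congr perm_mx.
by apply/permP => k; rewrite permM !permE swap_indexK.
Qed.

(* Only the d diagonal basis vectors |a,a> are fixed by the swap. *)
Lemma tr_swap_mx : \tr swap_mx = d%:R.
Proof.
rewrite /mxtrace (reindex idx) /=; last first.
  by exists (@mxtens_unindex d d) => k _;
    [rewrite mxtens_indexK | rewrite mxtens_unindexK].
have -> : \sum_j swap_mx (idx j) (idx j)
          = \sum_a \sum_b swap_mx (idx (a, b)) (idx (a, b)).
  by rewrite pair_big; apply: eq_bigr => -[a b].
transitivity (\sum_(a < d) (1 : C)); last by rewrite sumr_const card_ord.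
apply: eq_bigr => a _; rewrite (bigD1 a) //= swap_mxE eqxx big1 ?addr0 //.
by move=> b /negbTE nba; rewrite swap_mxE nba.
Qed.

Lemma delta_swap_mx (k : 'I_(d * d)) :
  (delta_mx 0 k : 'rV[C]_(d * d)) *m swap_mx = delta_mx 0 (swap_index k).
Proof.
apply/matrixP => i j; rewrite !mxE (bigD1 k) //= big1 ?addr0.
  by rewrite !mxE !eqxx /= !ord1 eqxx /= mul1r permE eq_sym.
by move=> l nlk; rewrite !mxE (negbTE nlk) andbF mul0r.
Qed.

End SwapOperator.

Section WernerMatrices.
Variable C : numClosedFieldType.
Variable d : nat.

Notation idx := (@mxtens_index d d).
Notation D := (d%:R : C).

Definition werner (a b : C) : 'M[C]_(d * d) := a *: 1%:M + b *: swap_mx C d.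

(* Since F^2 = I, the family is closed under products. *)
Lemma werner_mul (a b c e : C) :
  werner a b *m werner c e = werner (a * c + b * e) (a * e + b * c).
Proof.
rewrite /werner mulmxDl !mulmxDr -!scalemxAl -!scalemxAr !mul1mx !mulmx1.
rewrite swap_mx_invol !scalerA !scalerDl (mulrC b c) (mulrC b e).
by rewrite -!addrA; congr (_ + _); rewrite [RHS]addrC -addrA.
Qed.

Lemma tr_werner (a b : C) : \tr (werner a b) = a * (D * D) + b * D.
Proof. by rewrite mxtraceD !mxtraceZ mxtrace1 tr_swap_mx natrM. Qed.

(* A left eigenvector v of W(a,b) and vF span an F-stable plane on which
   W acts as [[a,b],[b,a]], so every eigenvalue is a+b or a-b. *)
Lemma werner_eigenvalue_cases (a b lam : C) :
  eigenvalue (werner a b) lam -> lam = a + b \/ lam = a - b.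
Proof.
case/eigenvalueP => v Hv nv0.
have vF : b *: (v *m swap_mx C d) = (lam - a) *: v.
  by move: Hv; rewrite mulmxDr -!scalemxAr mulmx1 scalerBl => <-; rewrite addrC addKr.
have vFF : b *: v = (lam - a) *: (v *m swap_mx C d).
  by rewrite scalemxAl -vF -scalemxAl -mulmxA swap_mx_invol mulmx1.
have : ((lam - a) ^+ 2 - b ^+ 2) *: v = 0.
  by rewrite scalerBl !expr2 -!scalerA -vF vFF !scalerA mulrC subrr.
move/eqP; rewrite scaler_eq0 (negbTE nv0) orbF subr_sqr mulf_eq0.
rewrite subr_eq0 addr_eq0 !subr_eq.
by case/orP => /eqP ->; [left | right]; rewrite addrC.
Qed.

(* For d >= 2 the antisymmetric vector |0,1> - |1,0> has eigenvalue a-b. *)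
Lemma werner_eigenvalue_sub (a b : C) :
  (2 <= d)%N -> eigenvalue (werner a b) (a - b).
Proof.
move=> d2; have d0 : (0 < d)%N by apply: leq_trans d2.
pose k01 := idx (Ordinal d0, Ordinal d2); pose k10 := idx (Ordinal d2, Ordinal d0).
apply/eigenvalueP; exists (delta_mx 0 k01 - delta_mx 0 k10).
  rewrite /werner mulmxDr -!scalemxAr mulmx1 mulmxBl !delta_swap_mx.
  rewrite !swap_index_idx -(opprB (delta_mx 0 k01)) scalerN.
  by rewrite scalerBl.
apply/eqP => /matrixP /(_ 0 k01); rewrite !mxE !eqxx /= idx_eq xpair_eqE /=.
by move/eqP; rewrite subr0 oner_eq0.
Qed.

Lemma werner_neg_eigenvalue (a b : C) :
  (2 <= d)%N -> 0 < a + b ->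
  (exists2 lam : C, eigenvalue (werner a b) lam & lam < 0) <-> a - b < 0.
Proof.
move=> d2 ab0; split; last by exists (a - b) => //; exact: werner_eigenvalue_sub.
case=> lam /werner_eigenvalue_cases [] -> // lam0.
by have := lt_trans lam0 ab0; rewrite ltxx.
Qed.

Lemma werner_moment_gap (a b : C) :
  a * (D * D) + b * D = 1 ->
  \tr (werner a b ^+ 3) - \tr (werner a b ^+ 2) ^+ 2
    = (D * D * (D * D - 1) * (a + b) * b ^+ 2) * (a - b).
Proof.
move=> unit_tr.
rewrite exprS expr2 -!mulmxE !werner_mul !tr_werner.
by rewrite -[X in X - _ = _]mul1r -{1}unit_tr; ring.
Qed.

Lemma werner_moment_test (a b : C) :
  (2 <= d)%N -> a * (D * D) + b * D = 1 -> 0 <= a -> 0 <= b -> 0 < a + b ->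
  \tr (werner a b ^+ 3) < \tr (werner a b ^+ 2) ^+ 2 <-> a - b < 0.
Proof.
move=> d2 unit_tr a0 b0 ab0; rewrite -subr_lt0 werner_moment_gap //.
have D0 : 0 < D by rewrite ltr0n (leq_trans _ d2).
have D21 : 0 < D * D - 1.
  by rewrite subr_gt0 -natrM ltr1n (leq_trans d2) // leq_pmull // ltnW.
move: b0; rewrite le0r => /predU1P [-> | bpos].
  rewrite expr0n mulr0 !mul0r subr0 ltxx.
  by split => // /(le_lt_trans a0); rewrite ltxx.
by rewrite pmulr_rlt0 // !mulr_gt0 // exprn_gt0.
Qed.

End WernerMatrices.

Section IsotropicState.
Variable C : numClosedFieldType.
Variable d : nat.

Notation idx := (@mxtens_index d d).
Notation D := (d%:R : C).

Lemma sum_diag_deltaE p q :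
  (\sum_(i < d) delta_mx (idx (i, i)) 0 : 'cV[C]_(d * d)) (idx (p, q)) 0
    = (p == q)%:R.
Proof.
rewrite summxE; case: (eqVneq p q) => [<-|npq].
  rewrite (bigD1 p) //= mxE idx_eq eqxx /= big1 ?addr0 // => a nap.
  by rewrite mxE idx_eq xpair_eqE andbb eq_sym (negbTE nap).
rewrite big1 // => a _; rewrite mxE idx_eq xpair_eqE.
by case: (eqVneq p a) => [<-|] //=; rewrite eq_sym (negbTE npq).
Qed.

Lemma sqrtC_norm2_inv : (0 < d)%N -> (sqrtC D)^-1 * ((sqrtC D)^-1)^* = D^-1.
Proof.
move=> d0; rewrite conj_Creal; last first.
  by apply: ger0_real; rewrite invr_ge0 sqrtC_ge0 ler0n.
by rewrite -invrM ?unitfE ?sqrtC_eq0 ?pnatr_eq0 -?lt0n // -expr2 sqrtCK.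
Qed.

Lemma ptA_rho_iso (alpha : C) : (0 < d)%N ->
  ptA (rho_iso d alpha) = werner C d (alpha / D ^+ 2) ((1 - alpha) / D).
Proof.
move=> d0; apply/matrixP => i j.
case: i / (mxtens_indexP i) => i1 i2; case: j / (mxtens_indexP j) => j1 j2.
rewrite /ptA /rho_iso /werner !mxE !mxtens_indexK /= big_ord1 !mxE.
rewrite permE swap_index_idx !idx_eq !xpair_eqE !sum_diag_deltaE rmorphM rmorph_nat.
rewrite mulrACA sqrtC_norm2_inv // -natrM mulnb (eq_sym j1 i1) (eq_sym j1 i2).
by rewrite mulrA.
Qed.

End IsotropicState.

Section Coefficients.
Variables (C : numClosedFieldType) (d : nat) (alpha : C).
Hypothesis d0 : (0 < d)%N.

Notation D := (d%:R : C).
Let a := alpha / D ^+ 2.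
Let b := (1 - alpha) / D.

Let D0 : 0 < D. Proof. by rewrite ltr0n. Qed.

(* rho has unit trace, i.e. Tr W(a,b) = 1. *)
Lemma iso_coeff_trace : a * (D * D) + b * D = 1.
Proof. by rewrite /a /b; field; rewrite lt0r_neq0. Qed.

(* a+b is the eigenvalue of rho^{T_A} on symmetric vectors; it is positive. *)
Lemma iso_coeff_sum_pos : 0 <= alpha <= 1 -> 0 < a + b.
Proof.
case/andP=> a0 a1.
have -> : a + b = (alpha + D * (1 - alpha)) / (D * D).
  by rewrite /a /b; field; rewrite lt0r_neq0.
rewrite divr_gt0 ?mulr_gt0 //; apply: (lt_le_trans ltr01).
have one_split : alpha + (1 - alpha) = 1 by rewrite addrC subrK.
rewrite -[X in X <= _]one_split lerD2l.
by rewrite ler_peMl ?subr_ge0 // ler1n.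
Qed.

Lemma iso_coeff_sub_neg : a - b < 0 <-> alpha < D / (D + 1).
Proof.
have scaled : (a - b) * (D * D) = alpha * (D + 1) - D.
  by rewrite /a /b; field; rewrite lt0r_neq0.
rewrite -(pmulr_llt0 (a - b) (mulr_gt0 D0 D0)) scaled subr_lt0.
by rewrite ltr_pdivlMr ?addr_gt0.
Qed.

End Coefficients.

Theorem mainTheorem5 (C : numClosedFieldType) (d : nat) (alpha : C) :
  (2 <= d)%N -> 0 <= alpha <= 1 ->
  (pmoment d alpha 3 < pmoment d alpha 2 ^+ 2 <->
     exists2 lam : C, eigenvalue (ptA (rho_iso d alpha)) lam & lam < 0)
  /\
  ((exists2 lam : C, eigenvalue (ptA (rho_iso d alpha)) lam & lam < 0) <->
     alpha < d%:R / (d%:R + 1)).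
Proof.
move=> d2 alpha01; have d0 : (0 < d)%N by apply: leq_trans d2.
have /andP[alpha0 alpha1] := alpha01.
rewrite /pmoment ptA_rho_iso //.
have ab_pos := @iso_coeff_sum_pos C d alpha d0 alpha01.
have a_ge0 : 0 <= alpha / d%:R ^+ 2 by rewrite divr_ge0 ?exprn_ge0 ?ler0n.
have b_ge0 : 0 <= (1 - alpha) / d%:R by rewrite divr_ge0 ?subr_ge0 ?ler0n.
rewrite werner_neg_eigenvalue // werner_moment_test ?iso_coeff_trace //.
by rewrite iso_coeff_sub_neg.
Qed.
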